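(* Let $Q\in\mathbb R^{m\times n}$ with $\mathrm{rank}(Q)=n$, $p\in\mathbb R^m$, $r>0$, $\mathcal S=\{x\in\mathbb R^n:\|Qx-p\|_2\le r\}$ with $\mathcal S\cap\mathbb Z^n\neq\emptyset$, and $\alpha\in\mathbb R^n$. Then $$\min_{x\in\mathcal S\cap\mathbb Z^n}\alpha^Tx-\min_{x\in\mathcal S}\alpha^Tx\le 2\,\|Q(Q^TQ)^{-1}\alpha\|_2\,\mu(Q).$$
   Context: For $Q\in\mathbb R^{m\times n}$ of full column rank, $\mu(Q)$ denotes the covering radius of the lattice $Q\mathbb Z^n$: $\mu(Q)=\max_{x\in\mathbb R^n}\min_{z\in\mathbb Z^n}\|Qx-Qz\|_2$. *)

From HB Require Import structures.
From mathcomp Require Import all_boot all_order all_algebra.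
From mathcomp Require Import all_classical all_reals.
Set Implicit Arguments. Unset Strict Implicit. Unset Printing Implicit Defensive.
Import Order.TTheory GRing.Theory Num.Theory.
Local Open Scope ring_scope.
Local Open Scope classical_set_scope.

Definition norm2 {R : realType} {k : nat} (v : 'cV[R]_k) : R :=
  Num.sqrt (\sum_(i < k) (v i 0) ^+ 2).

Definition is_int_vec {R : realType} {k : nat} (z : 'cV[R]_k) : Prop :=
  forall i, z i 0 \is a Num.int.

Definition dotv {R : realType} {k : nat} (a x : 'cV[R]_k) : R := (a^T *m x) 0 0.

Definition covering_radius {R : realType} {m n : nat} (Q : 'M[R]_(m, n)) : R :=
  sup [set inf [set norm2 (Q *m x - Q *m z) | z in is_int_vec] | x in [set: 'cV[R]_n]].

Definition ellS {R : realType} {m n : nat} (Q : 'M[R]_(m, n)) (p : 'cV[R]_m) (r : R)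
  : set 'cV[R]_n := [set x | norm2 (Q *m x - p) <= r].

(* With x_c := (Q^T Q)^-1 Q^T p the residual p - Q x_c is orthogonal to the range of Q,
   so S = {x : ||Q (x - x_c)|| <= rho} for some rho, and alpha^T x = alpha^T x_c +
   w^T Q (x - x_c) with w := Q (Q^T Q)^-1 alpha.  Over S the objective is therefore at
   least alpha^T x_c - ||w|| rho.  If rho > mu(Q), the point y on the line
   x_c - t (Q^T Q)^-1 alpha with ||Q (y - x_c)|| = rho - mu(Q) has an integer point
   within Q-distance mu(Q) (up to any eps), which lies in S and has objective at most
   alpha^T x_c - ||w|| (rho - mu(Q)) + ||w|| mu(Q).  If rho <= mu(Q), any integer point
   of S has objective at most alpha^T x_c + ||w|| rho
   <= alpha^T x_c - ||w|| rho + 2 ||w|| mu(Q). *)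
From HB Require Import structures.
From mathcomp Require Import all_boot all_order all_algebra.
From mathcomp Require Import all_classical all_reals.
From mathcomp Require Import ring lra.
Import Order.TTheory GRing.Theory Num.Theory.
Local Open Scope ring_scope.
Local Open Scope classical_set_scope.

Section EuclideanNorm.
Context {R : realType} {k : nat}.
Implicit Types (u v w : 'cV[R]_k).

Lemma dotvE u v : dotv u v = \sum_i u i 0 * v i 0.
Proof. by rewrite /dotv mxE; apply: eq_bigr => i _; rewrite mxE. Qed.

Lemma dotvC u v : dotv u v = dotv v u.
Proof. by rewrite /dotv -[u^T *m v]trmxK trmx_mul trmxK mxE. Qed.

Lemma dotvDr u v w : dotv u (v + w) = dotv u v + dotv u w.
Proof. by rewrite /dotv mulmxDr mxE. Qed.

Lemma dotvNr u v : dotv u (- v) = - dotv u v.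
Proof. by rewrite /dotv mulmxN mxE. Qed.

Lemma dotvZr u v a : dotv u (a *: v) = a * dotv u v.
Proof. by rewrite /dotv -scalemxAr mxE. Qed.

Lemma dotvBr u v w : dotv u (v - w) = dotv u v - dotv u w.
Proof. by rewrite dotvDr dotvNr. Qed.

Lemma dotvDl u v w : dotv (v + w) u = dotv v u + dotv w u.
Proof. by rewrite dotvC dotvDr !(dotvC u). Qed.

Lemma dotvBl u v w : dotv (v - w) u = dotv v u - dotv w u.
Proof. by rewrite dotvC dotvBr !(dotvC u). Qed.

Lemma norm2_ge0 v : 0 <= norm2 v.
Proof. exact: sqrtr_ge0. Qed.

Lemma norm2_sq v : norm2 v ^+ 2 = dotv v v.
Proof.
rewrite /norm2 sqr_sqrtr; last by apply: sumr_ge0 => i _; rewrite sqr_ge0.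
by rewrite dotvE; apply: eq_bigr => i _; rewrite expr2.
Qed.

Lemma dotvv_eq0 v : (dotv v v == 0) = (v == 0).
Proof.
apply/idP/eqP => [|->]; last by rewrite dotvE big1 // => i _; rewrite mxE mul0r.
rewrite dotvE psumr_eq0 => [/allP v0|i _]; last by rewrite -expr2 sqr_ge0.
apply/matrixP => i j; rewrite (ord1 j) mxE.
by have /implyP/(_ isT) := v0 i (mem_index_enum i); rewrite mulf_eq0 orbb => /eqP.
Qed.

Lemma norm2_le_sqr v (a : R) : 0 <= a -> (norm2 v <= a) = (norm2 v ^+ 2 <= a ^+ 2).
Proof. by move=> a0; rewrite ler_sqr ?nnegrE ?norm2_ge0. Qed.

Lemma norm2N v : norm2 (- v) = norm2 v.
Proof. by rewrite /norm2; congr Num.sqrt; apply: eq_bigr => i _; rewrite mxE sqrrN. Qed.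

Lemma norm2Z a v : norm2 (a *: v) = `|a| * norm2 v.
Proof.
rewrite /norm2 -sqrtr_sqr -sqrtrM ?sqr_ge0 // mulr_sumr; congr Num.sqrt.
by apply: eq_bigr => i _; rewrite mxE exprMn.
Qed.

Lemma cauchy_schwarz u v : `|dotv u v| <= norm2 u * norm2 v.
Proof.
suff : dotv u v ^+ 2 <= (norm2 u * norm2 v) ^+ 2.
  by move=> h; rewrite -ler_sqr ?nnegrE ?mulr_ge0 ?norm2_ge0 // real_normK ?num_real.
have [->|u0] := eqVneq u 0.
  by rewrite /dotv trmx0 mul0mx mxE expr2 mul0r sqr_ge0.
have uu0 : 0 < dotv u u by rewrite lt_def dotvv_eq0 u0 -norm2_sq sqr_ge0.
(* the discriminant of t |-> ||t u - v||^2 is nonpositive *)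
pose t := dotv u v / dotv u u.
have tuu : t * dotv u u = dotv u v by rewrite divfK ?gt_eqF.
have : 0 <= dotv (t *: u - v) (t *: u - v) by rewrite -norm2_sq sqr_ge0.
rewrite !(dotvBl, dotvBr) !(dotvZr, dotvC (t *: u)) (dotvC v u) tuu exprMn !norm2_sq.
nra.
Qed.

Lemma dotv_le u v : dotv u v <= norm2 u * norm2 v.
Proof. exact: le_trans (ler_norm _) (cauchy_schwarz u v). Qed.

Lemma dotv_ge u v : - (norm2 u * norm2 v) <= dotv u v.
Proof. by rewrite lerNl -dotvNr -(norm2N v) dotv_le. Qed.

Lemma norm2D u v : norm2 (u + v) <= norm2 u + norm2 v.
Proof.
rewrite -ler_sqr ?nnegrE ?addr_ge0 ?norm2_ge0 // norm2_sq sqrrD !norm2_sq.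
rewrite !(dotvDl, dotvDr) (dotvC v u); have := dotv_le u v; lra.
Qed.

End EuclideanNorm.

Section Lattice.
Context {R : realType} {m n : nat} (Q : 'M[R]_(m, n)).

Lemma gram_unitmx : \rank Q = n -> Q^T *m Q \in unitmx.
Proof.
move=> rkQ; have QtT_free : row_free Q^T by rewrite /row_free mxrank_tr rkQ.
rewrite -row_free_unit -kermx_eq0; apply/eqP/row_matrixP => i; rewrite row0.
set v := row i _; have vK : v *m (Q^T *m Q) = 0 by apply/sub_kermxP; exact: row_sub.
suff vQt0 : v *m Q^T = 0 by apply/eqP; rewrite -(mulmx_free_eq0 _ QtT_free) vQt0.
(* v Q^T Q v^T = ||Q v^T||^2 *)
have : dotv (Q *m v^T) (Q *m v^T) == 0.
  by rewrite /dotv trmx_mul trmxK mulmxA -(mulmxA v) vK mul0mx mxE.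
by rewrite dotvv_eq0 => /eqP/(congr1 trmx); rewrite trmx_mul trmxK trmx0.
Qed.

Lemma dotv_gram (alpha x : 'cV[R]_n) : Q^T *m Q \in unitmx ->
  dotv alpha x = dotv (Q *m invmx (Q^T *m Q) *m alpha) (Q *m x).
Proof.
move=> QtQ_unit; rewrite /dotv !trmx_mul trmx_inv trmx_mul trmxK.
by rewrite -!mulmxA (mulmxA Q^T) (mulmxA (invmx _)) mulVmx // mul1mx.
Qed.

Definition covering_dist (x : 'cV[R]_n) : R :=
  inf [set norm2 (Q *m x - Q *m z) | z in is_int_vec].

Lemma covering_dist_lbound x :
  has_lbound [set norm2 (Q *m x - Q *m z) | z in is_int_vec].
Proof. by exists 0 => _ [z _ <-]; exact: norm2_ge0. Qed.

(* rounding down every coordinate gives an integer point at bounded distance *)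
Lemma covering_dist_ubound : has_ubound (range covering_dist).
Proof.
exists (Num.sqrt (\sum_i (\sum_j `|Q i j|) ^+ 2)) => _ [x _ <-].
pose z : 'cV[R]_n := \col_j (Num.floor (x j 0))%:~R.
have z_int : is_int_vec z by move=> j; rewrite mxE intr_int.
apply: le_trans (ge_inf (covering_dist_lbound x) _) _; first by exists z.
rewrite -mulmxBr /norm2 ler_sqrt; last by apply: sumr_ge0 => i _; rewrite sqr_ge0.
apply: ler_sum => i _; rewrite -real_normK ?num_real // ler_sqr ?nnegrE //.
  rewrite mxE; apply: le_trans (ler_norm_sum _ _ _) (ler_sum _ _) => j _.
  rewrite normrM !mxE ler_piMr //; have := floor_itv (x j 0).
  by rewrite intrD => /andP[? ?]; rewrite ger0_norm ?subr_ge0; lra.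
by apply: sumr_ge0 => j _.
Qed.

Lemma covering_radius_int_point (y : 'cV[R]_n) e : 0 < e ->
  exists2 z, is_int_vec z & norm2 (Q *m y - Q *m z) < covering_radius Q + e.
Proof.
move=> e0; have dist_le : covering_dist y <= covering_radius Q.
  by apply: (ub_le_sup covering_dist_ubound); exists y.
have [_ [z z_int <-] ?] : exists2 t,
    [set norm2 (Q *m y - Q *m z) | z in is_int_vec] t & t < covering_radius Q + e.
  apply: inf_lt; last by rewrite -/(covering_dist y) ltr_pwDr.
  by exists (norm2 (Q *m y - Q *m 0)), 0 => // i; rewrite mxE rpred0.
by exists z.
Qed.

End Lattice.

Section BallObjective.
Context {R : realType} {m n : nat} (Q : 'M[R]_(m, n)).
Context {c : 'cV[R]_n} (d : 'cV[R]_n) {rho : R}.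
Let w := Q *m d.
Let in_ball (x : 'cV[R]_n) := norm2 (Q *m (x - c)) <= rho.

Lemma ball_objective_ge {x} : in_ball x -> - (norm2 w * rho) <= dotv w (Q *m (x - c)).
Proof.
move=> x_in; apply: le_trans _ (dotv_ge _ _); rewrite lerN2.
by rewrite ler_wpM2l ?norm2_ge0.
Qed.

Lemma ball_int_point_objective_le {e} : 0 < e ->
  (exists2 z0, is_int_vec z0 & in_ball z0) ->
  exists z, [/\ is_int_vec z, in_ball z &
    dotv w (Q *m (z - c)) <= norm2 w * (2 * covering_radius Q - rho) + e].
Proof.
set mu := covering_radius Q; set nw := norm2 w => e0 [z0 z0_int z0_in].
have nw0 : 0 <= nw by exact: norm2_ge0.
have [rho_le|mu_lt] := lerP rho mu.
  exists z0; split => //; apply: le_trans (dotv_le _ _) _.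
  by rewrite -/nw; have := ler_wpM2l nw0 z0_in; nra.
pose eps := Num.min (rho - mu) (e / (2 * nw + 1)).
have eps0 : 0 < eps by rewrite lt_min subr_gt0 mu_lt divr_gt0 // ltr_wpDl ?mulr_ge0.
have eps_le : eps <= rho - mu by rewrite ge_min lexx.
have nw_eps : 2 * nw * eps <= e.
  have : eps <= e / (2 * nw + 1) by rewrite ge_min lexx orbT.
  rewrite ler_pdivlMr ?ltr_wpDl ?mulr_ge0 //; nra.
(* y lies on the line of steepest descent, at Q-distance rho - mu - eps from c *)
pose s := (rho - mu - eps) / nw; pose y := c - s *: d.
have s0 : 0 <= s by rewrite divr_ge0 //; lra.
have [s_nw s_nw2] : s * nw <= rho - mu - eps /\ s * nw ^+ 2 = nw * (rho - mu - eps).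
  have [->|nw_neq0] := eqVneq nw 0; first by rewrite !(mulr0, mul0r, expr0n) /=; lra.
  by rewrite /s divfK // expr2 mulrA divfK // mulrC.
have [z z_int zy] := covering_radius_int_point Q y _ eps0; rewrite -/mu in zy.
have Qz : Q *m (z - c) = - (Q *m y - Q *m z) - s *: w.
  by apply/matrixP => i j; rewrite /y /w !mulmxBr -scalemxAr !mxE; ring.
exists z; split => //.
  rewrite /in_ball Qz; apply: le_trans (norm2D _ _) _.
  by rewrite !norm2N norm2Z ger0_norm // -/nw; lra.
rewrite Qz dotvBr dotvNr dotvZr -norm2_sq -/nw s_nw2.
have := dotv_ge w (Q *m y - Q *m z); rewrite -/nw.
have := ler_wpM2l nw0 (ltW zy); nra.
Qed.

End BallObjective.

Section Ellipsoid.
Context {R : realType} {m n : nat} (Q : 'M[R]_(m, n)) (p : 'cV[R]_m).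
Hypothesis QtQ_unit : Q^T *m Q \in unitmx.

Definition lsq_center : 'cV[R]_n := invmx (Q^T *m Q) *m (Q^T *m p).

Lemma lsq_residual_orthogonal (x : 'cV[R]_n) :
  dotv (Q *m x) (p - Q *m lsq_center) = 0.
Proof.
rewrite /dotv trmx_mul -mulmxA mulmxBr /lsq_center !mulmxA mulmxV // mul1mx.
by rewrite subrr mulmx0 mxE.
Qed.

Lemma norm2_sub_lsq_sq (x : 'cV[R]_n) : norm2 (Q *m x - p) ^+ 2 =
  norm2 (Q *m (x - lsq_center)) ^+ 2 + norm2 (p - Q *m lsq_center) ^+ 2.
Proof.
have -> : Q *m x - p = Q *m (x - lsq_center) - (p - Q *m lsq_center).
  by rewrite mulmxBr opprB addrA subrK.
move: (p - _) (lsq_residual_orthogonal (x - lsq_center)) => res orth.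
by rewrite !norm2_sq dotvBl !dotvBr orth (dotvC res) orth subr0 sub0r opprK.
Qed.

Lemma ellS_ball r : 0 <= r -> ellS Q p r !=set0 ->
  ellS Q p r = [set x | norm2 (Q *m (x - lsq_center)) <=
                        Num.sqrt (r ^+ 2 - norm2 (p - Q *m lsq_center) ^+ 2)].
Proof.
move=> r0 [x0 x0S]; set rho2 := r ^+ 2 - _.
have in_ellS_sq x : (norm2 (Q *m x - p) <= r) =
    (norm2 (Q *m (x - lsq_center)) ^+ 2 <= rho2).
  by rewrite norm2_le_sqr // norm2_sub_lsq_sq lerBrDr.
have rho2_ge0 : 0 <= rho2.
  have := x0S; rewrite /ellS /= in_ellS_sq; apply: le_trans; exact: sqr_ge0.
apply/seteqP; split => x /= xS.
- by rewrite norm2_le_sqr ?sqrtr_ge0 // (sqr_sqrtr rho2_ge0) -in_ellS_sq.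
- by move: xS; rewrite norm2_le_sqr ?sqrtr_ge0 // (sqr_sqrtr rho2_ge0) -in_ellS_sq.
Qed.

End Ellipsoid.

Theorem proposition6p2 (R : realType) (m n : nat) (Q : 'M[R]_(m, n))
  (p : 'cV[R]_m) (r : R) (alpha : 'cV[R]_n) :
  \rank Q = n -> 0 < r ->
  (ellS Q p r `&` is_int_vec) !=set0 ->
  inf [set dotv alpha x | x in ellS Q p r `&` is_int_vec]
  - inf [set dotv alpha x | x in ellS Q p r]
  <= 2 * norm2 (Q *m invmx (Q^T *m Q) *m alpha) * covering_radius Q.
Proof.
move=> rkQ r0 [z0 [z0S z0_int]]; have QtQ_unit := gram_unitmx Q rkQ.
have S_ne : ellS Q p r !=set0 by exists z0.
rewrite (ellS_ball Q p QtQ_unit r (ltW r0) S_ne) in z0S *.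
set c := lsq_center Q p in z0S *; set rho := Num.sqrt _ in z0S *.
set B := [set x | _ <= rho] in z0S *.
set d := invmx (Q^T *m Q) *m alpha; rewrite -mulmxA -/d; set nw := norm2 (Q *m d).
have objE x : dotv alpha x = dotv alpha c + dotv (Q *m d) (Q *m (x - c)).
  by rewrite !(dotv_gram Q _ _ QtQ_unit) -mulmxA -/d mulmxBr dotvBr addrC subrK.
have obj_ge x : B x -> dotv alpha c - nw * rho <= dotv alpha x.
  move=> x_in; rewrite (objE x).
  by have := ball_objective_ge Q d x_in; rewrite -/nw; lra.
have inf_ge : dotv alpha c - nw * rho <= inf [set dotv alpha x | x in B].
  apply: lb_le_inf => [|_ [x x_in <-]]; [by exists (dotv alpha z0), z0 | exact: obj_ge].
apply/ler_addgt0Pr => e e0.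
have [z [z_int z_in z_le]] :=
  ball_int_point_objective_le Q d e0 (ex_intro2 _ _ z0 z0_int z0S).
have inf_le : inf [set dotv alpha x | x in B `&` is_int_vec] <= dotv alpha z.
  apply: ge_inf; last by exists z.
  by exists (dotv alpha c - nw * rho) => _ [x [x_in _] <-]; exact: obj_ge.
by move: inf_ge inf_le z_le; rewrite (objE z) -/nw; lra.
Qed.
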